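(* Let $\epsilon\in(0,1/e]$ and $\eta=\epsilon/\ln(1/\epsilon)$. Let $D$ be a regular distribution with revenue curve $R(q)=q\,v^D(q)$, let $q\in(0,1)$ and $0<\Delta\le q(1-q)\eta$. If $\tilde v$ is any value with $v^D(q+\Delta/2)\le\tilde v\le v^D(q-\Delta/2)$ (in particular, a targeted sample of $D$ from the quantile interval $[q-\Delta/2,q+\Delta/2]$), then the estimate $\tilde R(q)=q\,\tilde v$ satisfies $$\frac{|\tilde R(q)-R(q)|}{R(q)}\le\eta.$$
   Context: Quantile $q^D(v)=\Pr_{x\sim D}[x\ge v]$; value at quantile $v^D(q)=\sup\{v\ge0:q^D(v)\ge q\}$, nonincreasing in $q$. $D$ is regular: it has a density and its revenue curve $R(q)=q\,v^D(q)$ is concave on $(0,1]$ (with $R\ge0$). A targeted sample from $[a,b]$ is $v^D(u)$ with $u$ uniform on $[a,b]$. *)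

From HB Require Import structures.
From mathcomp Require Import all_boot all_order all_algebra.
From mathcomp Require Import all_classical all_reals all_analysis.
Set Implicit Arguments. Unset Strict Implicit. Unset Printing Implicit Defensive.
Import Order.TTheory GRing.Theory Num.Theory.
Local Open Scope classical_set_scope.
Local Open Scope ring_scope.

Definition quantile (R : realType) (D : probability R R) (v : R) : R :=
  fine (D `[v, +oo[%classic).

Definition value_at (R : realType) (D : probability R R) (q : R) : R :=
  sup [set v : R | 0 <= v /\ q <= quantile D v].

Definition revenue (R : realType) (D : probability R R) (q : R) : R :=
  q * value_at D q.

Definition has_density (R : realType) (D : probability R R) : Prop :=
  exists f : R -> R, measurable_fun setT f /\ (forall x, 0 <= f x) /\
    forall A : set R, measurable A ->
      D A = (\int[lebesgue_measure]_(x in A) (f x)%:E)%E.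

Definition concave_on_01 (R : realType) (g : R -> R) : Prop :=
  forall x y t : R, 0 < x <= 1 -> 0 < y <= 1 -> 0 <= t <= 1 ->
    t * g x + (1 - t) * g y <= g (t * x + (1 - t) * y).

Definition regular (R : realType) (D : probability R R) : Prop :=
  has_density D /\ concave_on_01 (revenue D) /\
  (forall q : R, 0 < q <= 1 -> 0 <= revenue D q).

(* Write g for the revenue curve R(q) = q v(q) of a regular distribution and
   h = eps / ln(1/eps).  The whole argument is about a concave function g on
   (0,1] that is nonnegative there (in particular g 1 >= 0):

   - concavity between x and 1 shows that x |-> g x / (1 - x) is
     nondecreasing on (0,1), i.e. g x (1 - y) <= g y (1 - x) for x <= y < 1;
   - the sample vt lies between v(q + Delta/2) and v(q - Delta/2), i.e.
     g(b) <= b vt and a vt <= g(a) with a, b = q -/+ Delta/2; comparing g(a),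
     g(b) with g(q) through the monotone ratio, and using
     Delta <= q (1 - q) h, gives (1 - h) g q <= q vt <= (1 + h) g q;
   - finally 0 <= h <= 1 because ln(1/eps) >= 1 when eps <= 1/e. *)

From HB Require Import structures.
From mathcomp Require Import all_boot all_order all_algebra.
From mathcomp Require Import all_classical all_reals all_analysis.
From mathcomp Require Import ring lra.
Set Implicit Arguments. Unset Strict Implicit. Unset Printing Implicit Defensive.
Import Order.TTheory GRing.Theory Num.Theory.
Local Open Scope ring_scope.

Lemma window_fits (R : realType) (q Delta h : R) :
  0 < q < 1 -> 0 <= h <= 1 -> Delta <= q * (1 - q) * h ->
  Delta <= q /\ Delta <= 1 - q.
Proof.
move=> /andP[q0 q1] /andP[h0 h1] Delta_small.
have Delta_le : Delta <= q * (1 - q).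
  apply: (le_trans Delta_small); rewrite -[leRHS]mulr1.
  by apply: ler_wpM2l; first by apply: mulr_ge0; lra.
by split; nra.
Qed.

Section ConcaveCurve.
Variables (R : realType) (g : R -> R).
Hypothesis g_concave : concave_on_01 g.
Hypothesis g_ge0 : forall x, 0 < x <= 1 -> 0 <= g x.

(* The ratio g x / (1 - x) is nondecreasing on (0,1): y is the convex
   combination t x + (1 - t) 1 with t = (1 - y) / (1 - x), and g 1 >= 0. *)
Lemma concave_ratio_compl_mono (x y : R) :
  0 < x -> x <= y -> y < 1 -> g x * (1 - y) <= g y * (1 - x).
Proof.
move=> x0 xy y1.
set t := (1 - y) / (1 - x).
have t01 : 0 <= t <= 1.
  by apply/andP; split; [apply: divr_ge0 | rewrite /t ler_pdivrMr]; lra.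
have y_comb : t * x + (1 - t) * 1 = y by rewrite /t; field; lra.
have t_scale : t * (1 - x) = 1 - y by rewrite /t; field; lra.
have g1 : 0 <= g 1 by apply: g_ge0; lra.
have := @g_concave x 1 t ltac:(lra) ltac:(lra) t01.
rewrite y_comb => conc.
have tg : t * g x <= g y by nra.
have := ler_wpM2r (_ : 0 <= 1 - x) tg => /(_ ltac:(lra)).
by rewrite mulrAC t_scale [(1 - y) * _]mulrC.
Qed.

Lemma revenue_estimate_lower (q Delta h vt : R) :
  0 < q < 1 -> 0 < Delta -> 0 <= h <= 1 -> Delta <= q * (1 - q) * h ->
  g (q + Delta / 2) <= (q + Delta / 2) * vt -> (1 - h) * g q <= q * vt.
Proof.
move=> q01 Delta0 h01 Delta_small gb.
have [_ Delta_le] := window_fits q01 h01 Delta_small.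
move: q01 h01 => /andP[q0 q1] /andP[h0 h1].
have b1 : q + Delta / 2 < 1 by lra.
set b := q + Delta / 2 in gb b1 *.
have qb : q <= b by rewrite /b; lra.
have mono := concave_ratio_compl_mono q0 qb b1.
have gq : 0 <= g q by apply: g_ge0; lra.
have poly : (1 - h) * b * (1 - q) <= q * (1 - b) by rewrite /b; nra.
have pos : 0 < b * (1 - q) by apply: mulr_gt0; lra.
have gb' : g b * (1 - q) <= b * vt * (1 - q) by apply: ler_wpM2r; lra.
have chain : (1 - h) * g q * (b * (1 - q)) <= q * vt * (b * (1 - q)) by nra.
by rewrite -(ler_pM2r pos).
Qed.

Lemma revenue_estimate_upper (q Delta h vt : R) :
  0 < q < 1 -> 0 < Delta -> 0 <= h <= 1 -> Delta <= q * (1 - q) * h ->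
  (q - Delta / 2) * vt <= g (q - Delta / 2) -> q * vt <= (1 + h) * g q.
Proof.
move=> q01 Delta0 h01 Delta_small ga.
have [Delta_le _] := window_fits q01 h01 Delta_small.
move: q01 h01 => /andP[q0 q1] /andP[h0 h1].
have a_half : q / 2 <= q - Delta / 2 by lra.
have a0 : 0 < q - Delta / 2 by lra.
set a := q - Delta / 2 in ga a0 a_half *.
have aq : a <= q by rewrite /a; lra.
have mono := concave_ratio_compl_mono a0 aq q1.
have gq : 0 <= g q by apply: g_ge0; lra.
have slack : 0 <= h * (1 - q) * (a - q / 2).
  by apply: mulr_ge0; [apply: mulr_ge0|]; lra.
have Delta_a : Delta = 2 * (q - a) by rewrite /a; field.
have poly : q * (1 - a) <= (1 + h) * a * (1 - q).
  by rewrite Delta_a in Delta_small; lra.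
have pos : 0 < a * (1 - q) by apply: mulr_gt0; lra.
have ga' : q * (1 - q) * (a * vt) <= q * (1 - q) * g a.
  by apply: ler_wpM2l => //; apply: mulr_ge0; lra.
have mono_q : q * (g a * (1 - q)) <= q * (g q * (1 - a)) by apply: ler_wpM2l; lra.
have poly_g : g q * (q * (1 - a)) <= g q * ((1 + h) * a * (1 - q)).
  exact: ler_wpM2l.
have chain : q * vt * (a * (1 - q)) <= (1 + h) * g q * (a * (1 - q)) by lra.
by rewrite -(ler_pM2r pos).
Qed.

Lemma revenue_estimate_relative_error (q Delta h vt : R) :
  0 < q < 1 -> 0 < Delta -> 0 <= h <= 1 -> Delta <= q * (1 - q) * h ->
  g (q + Delta / 2) <= (q + Delta / 2) * vt ->
  (q - Delta / 2) * vt <= g (q - Delta / 2) ->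
  `| q * vt - g q | / g q <= h.
Proof.
move=> q01 Delta0 h01 Delta_small gb ga.
have lo := revenue_estimate_lower q01 Delta0 h01 Delta_small gb.
have hi := revenue_estimate_upper q01 Delta0 h01 Delta_small ga.
move: q01 h01 => /andP[q0 q1] /andP[h0 h1].
have gq : 0 <= g q by apply: g_ge0; lra.
have [->|gq_neq0] := eqVneq (g q) 0; first by rewrite invr0 mulr0.
have gq_gt0 : 0 < g q by rewrite lt_def gq_neq0.
by rewrite ler_pdivrMr // ler_norml; apply/andP; split; lra.
Qed.

End ConcaveCurve.

(* For 0 < eps <= 1/e we have ln (1/eps) >= 1, hence eps / ln (1/eps) is in [0,1]. *)
Lemma eps_over_ln_inv_01 (R : realType) (eps : R) :
  0 < eps -> eps <= (expR 1)^-1 -> 0 <= eps / ln (1 / eps) <= 1.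
Proof.
move=> eps0 eps_le.
have ln_ge1 : 1 <= ln (1 / eps).
  rewrite -[leLHS](expRK 1) ler_ln ?posrE ?expR_gt0 ?divr_gt0 //.
  by rewrite -[expR 1]invrK div1r lef_pV2 ?posrE ?invr_gt0 ?expR_gt0.
have einv_le1 : (expR 1)^-1 <= 1 :> R.
  by rewrite invf_le1 ?expR_gt0 //; have := @expR_ge1Dx R 1; lra.
apply/andP; split; first by apply: divr_ge0; lra.
by rewrite ler_pdivrMr; lra.
Qed.

Theorem mainTheorem12 (R : realType) (eps : R) (D : probability R R)
  (q Delta vt : R) :
  0 < eps -> eps <= (expR 1)^-1 ->
  regular D ->
  0 < q < 1 ->
  0 < Delta -> Delta <= q * (1 - q) * (eps / ln (1 / eps)) ->
  value_at D (q + Delta / 2) <= vt -> vt <= value_at D (q - Delta / 2) ->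
  `| q * vt - revenue D q | / revenue D q <= eps / ln (1 / eps).
Proof.
move=> eps0 eps_le [_ [concave rev_ge0]] q01 Delta0 Delta_small v_lo v_hi.
have h01 := eps_over_ln_inv_01 eps0 eps_le.
have [Delta_le_q _] := window_fits q01 h01 Delta_small.
have [q0 _] : 0 < q /\ q < 1 by apply/andP.
have rev_b : revenue D (q + Delta / 2) <= (q + Delta / 2) * vt.
  by rewrite /revenue ler_wpM2l //; lra.
have rev_a : (q - Delta / 2) * vt <= revenue D (q - Delta / 2).
  by rewrite /revenue ler_wpM2l //; lra.
exact: (revenue_estimate_relative_error concave rev_ge0 q01 Delta0 h01
          Delta_small rev_b rev_a).
Qed.
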